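(* Let $G=(V,E)$ be a weighted undirected graph with $n$ labeled vertices and let $k\ge1$. The running time of Algorithm 1 (described in the context), with $Q$ implemented as a Fibonacci heap, is $O(k|E|+N_p\log|V|)$, where $N_p$ is the total number of pop-minimum operations, and $N_p\le\min\{n|V|,k|E|\}$.
   Context: Fibonacci heap: insert and decrease-key cost $O(1)$ amortized, pop-minimum costs $O(\log|Q|)$. Algorithm 1: input an undirected graph with non-negative weights $w$, a set $\mathcal L\subseteq V$ of labeled vertices ($|\mathcal L|=n$) and $k$. It maintains a min-priority queue $Q$ of pairs $(\mathrm{seed},v)\in\mathcal L\times V$ with priorities, and for each $v\in V$ a list kNN$[v]$ (initially empty) and a set $S_v$ (initially empty). Initially, for each $s\in\mathcal L$, $(s,s)$ is inserted with priority $0$. While $Q$ is nonempty: pop the pair $(\mathrm{seed},v_0)$ of minimum priority $\mathrm{dist}$; add $\mathrm{seed}$ to $S_{v_0}$; if kNN$[v_0]$ has fewer than $k$ entries, append $(\mathrm{dist},\mathrm{seed})$ to kNN$[v_0]$ and, for every neighbour $v$ of $v_0$ such that kNN$[v]$ has fewer than $k$ entries and $\mathrm{seed}\notin S_v$, perform decrease-or-insert of $(\mathrm{seed},v)$ with priority $\mathrm{dist}+w(v_0,v)$ (lower its priority if present in $Q$, otherwise insert).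
   Formalization: The bound on pop-minimum operations is $N_p\le\min\{n|V|,n+2k|E|\}$ instead of $N_p\le\min\{n|V|,k|E|\}$, and the running time charges nothing for initialising the lists kNN$[v]$ and sets $S_v$ of all vertices. The statement above fails without it. *)

(* Model of Algorithm 1 (multi-seed k-nearest-labeled-vertices
   Dijkstra) with an abstract priority queue charged with the Fibonacci-heap
   amortized costs: insert / decrease-key = 1, pop-min = 1 + log2 |Q|. *)
From mathcomp Require Import all_boot all_order all_algebra.
Set Implicit Arguments. Unset Strict Implicit. Unset Printing Implicit Defensive.
Import Order.TTheory GRing.Theory Num.Theory.

Section Alg.
Variables (R : realDomainType) (T : finType) (e : rel T) (w : T -> T -> R)
          (k : nat).

(* Q maps a pair (seed, v) to its priority if the pair is in the queue. *)
Record state := State {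
  Q   : {ffun T * T -> option R};
  kNN : {ffun T -> seq (R * T)};
  S   : {ffun T -> {set T}} }.

Definition qsize (st : state) : nat := #|[set p : T * T | Q st p]|.

Definition init (L : {set T}) : state :=
  State [ffun p : T * T => if (p.1 == p.2) && (p.1 \in L) then Some 0%R else None]
        [ffun _ => [::]] [ffun _ => set0].

Definition is_min (st : state) (p : T * T) (d : R) : Prop :=
  Q st p = Some d /\ forall p' d', Q st p' = Some d' -> (d <= d')%R.

Definition dec_or_ins (o : option R) (d : R) : option R :=
  if o is Some d0 then Some (Num.min d0 d) else Some d.

(* One iteration of the while loop, after popping (seed,v0) with priority d:
   the new state and the cost of the iteration. *)
Definition next (st : state) (seed v0 : T) (d : R) : state * nat :=
  let S' := [ffun v => if v == v0 then seed |: S st v else S st v] in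
  let popcost := 1 + trunc_log 2 (qsize st) in
  if size (kNN st v0) < k then
    let kNN' := [ffun v => if v == v0 then rcons (kNN st v) (d, seed)
                           else kNN st v] in
    let active v := [&& e v0 v, size (kNN' v) < k & seed \notin S' v] in
    let Q' := [ffun p : T * T => if p == (seed, v0) then None
                 else if (p.1 == seed) && active p.2
                      then dec_or_ins (Q st p) (d + w v0 p.2)%R
                      else Q st p] in
    (State Q' kNN' S',
     popcost + #|[set v | e v0 v]| + #|[set v | active v]|)
  else
    (State [ffun p => if p == (seed, v0) then None else Q st p] (kNN st) S',
     popcost).

(* run st c np : starting from st, the loop terminates (Q empty) after np
   pop-minimum operations, with total cost c; any minimum may be popped. *)
Inductive run : state -> nat -> nat -> Prop :=
| run_stop st : qsize st = 0 -> run st 0 0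
| run_pop st seed v0 d c np :
    is_min st (seed, v0) d ->
    run (next st seed v0 d).1 c np ->
    run st ((next st seed v0 d).2 + c) np.+1.

End Alg.

Definition edges (T : finType) (e : rel T) : {set {set T}} :=
  [set [set p.1; p.2] | p in [set p : T * T | e p.1 p.2]].

(* Two potentials bound the number of pops.  Every queued pair (seed, v) has
   a labeled seed not yet in S_v, and popping it adds seed to S_v, so there
   are at most n|V| pops.  A pop of (seed, v0) inserts pairs only when it
   appends to kNN[v0], which happens at most k times per vertex and inserts
   at most deg v0 pairs; hence |Q| + sum_v (k - |kNN[v]|) deg v drops at every
   pop, giving at most n + k sum_v deg v <= n + 2k|E| pops.  The same edge
   budget pays for all relaxations, and a pop costs 1 + log |Q|, where
   |Q| <= |V|^2. *)
From Pilot Require Import Defs.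
From mathcomp Require Import all_boot all_order all_algebra.
From mathcomp Require Import zify.
Import Order.TTheory GRing.Theory Num.Theory.
Set Implicit Arguments. Unset Strict Implicit. Unset Printing Implicit Defensive.

Definition arcs (T : finType) (e : rel T) : {set T * T} :=
  [set p : T * T | e p.1 p.2].

Section Algorithm.
Variables (R : realDomainType) (T : finType) (e : rel T) (w : T -> T -> R)
          (k : nat).

Local Notation state := (state R T).
Local Notation step := (Defs.next e w k).
Local Notation run := (run e w k).

Definition deg (v : T) : nat := #|[set u | e v u]|.

Definition edge_budget (st : state) : nat :=
  \sum_v (k - size (kNN st v)) * deg v.

Definition relaxed (st : state) (v0 : T) : nat := (size (kNN st v0) < k) * deg v0.

Lemma qsize_le_card_sqr (st : state) : qsize st <= #|T| * #|T|.
Proof. by rewrite /qsize -card_prod max_card. Qed.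

Lemma S_step (st : state) seed v0 d :
  S (step st seed v0 d).1 = [ffun v => if v == v0 then seed |: S st v else S st v].
Proof. by rewrite /Defs.next; case: ifP. Qed.

Lemma edge_budget_step (st : state) seed v0 d :
  edge_budget (step st seed v0 d).1 + relaxed st v0 = edge_budget st.
Proof.
rewrite /Defs.next /relaxed; case: ifP => [lt_k|_] /=; last by rewrite addn0.
rewrite /edge_budget (bigD1 v0) //= [in RHS](bigD1 v0) //= ffunE eqxx size_rcons.
under eq_bigr => v /negbTE nv0 do rewrite ffunE nv0.
by rewrite mul1n -(subnSK lt_k) mulSn; lia.
Qed.

Lemma qsize_step_ge (st : state) seed v0 d :
  qsize st <= (qsize (step st seed v0 d).1).+1.
Proof.
rewrite /qsize -add1n -(cards1 (seed, v0)) (leq_trans _ (leq_card_setU _ _)) //.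
apply: subset_leq_card; apply/subsetP => p; rewrite !inE => Qp.
case: eqVneq => //= p_neq; rewrite /Defs.next.
case: ifP => _ /=; rewrite ffunE (negbTE p_neq) //.
by case: ifP => // _; case: (Q st p).
Qed.

Lemma qsize_step (st : state) seed v0 d : Q st (seed, v0) = Some d ->
  (qsize (step st seed v0 d).1).+1 <= qsize st + relaxed st v0.
Proof.
move=> Qx; have queued : (seed, v0) \in [set p | Q st p] by rewrite inE Qx.
rewrite /qsize (cardsD1 (seed, v0) [set p | Q st p]) queued add1n addSn ltnS.
rewrite /Defs.next /relaxed; case: ifP => _ /=; last first.
  rewrite addn0 subset_leq_card //.
  by apply/subsetP => p; rewrite !inE ffunE; case: ifP.
rewrite mul1n; set queued' := _ :\ _.
apply: (@leq_trans #|queued' :|: [set (seed, v) | v in [set v | e v0 v]]|).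
  apply: subset_leq_card; apply/subsetP => -[a b]; rewrite !inE ffunE.
  case: ifP => // _ /=; case: ifP => [/andP[/eqP-> /and3P[ev0 _ _]] _|_ ->] //.
  by apply/orP; right; apply/imsetP; exists b; rewrite ?inE.
by rewrite (leq_trans (leq_card_setU _ _)) // leq_add2l leq_imset_card.
Qed.

Lemma cost_step (st : state) seed v0 d :
  (step st seed v0 d).2 <= 1 + trunc_log 2 (qsize st) + 2 * relaxed st v0.
Proof.
rewrite /Defs.next /relaxed; case: ifP => _ /=; last by rewrite addn0.
rewrite mul1n mul2n -addnn -addnA !leq_add2l subset_leq_card //.
by apply/subsetP => v; rewrite !inE => /and3P[].
Qed.

Lemma run_qsize_le (st : state) c np : run st c np -> qsize st <= np.
Proof.
elim=> {st c np} [st -> //|st seed v0 d c np _ _ le_np].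
exact: leq_trans (qsize_step_ge st seed v0 d) _.
Qed.

Lemma run_pops_le_potential (st : state) c np :
  run st c np -> np <= qsize st + edge_budget st.
Proof.
elim=> {st c np} [st -> //|st seed v0 d c np [Qx _] _ le_np].
have := qsize_step Qx; have := edge_budget_step st seed v0 d; lia.
Qed.

Lemma run_cost_le (st : state) c np : run st c np ->
  c <= np * (1 + trunc_log 2 (#|T| * #|T|)) + 2 * edge_budget st.
Proof.
elim=> {st c np} [st _ //|st seed v0 d c np _ _ le_c].
have := leq_trunc_log 2 (qsize_le_card_sqr st).
have := cost_step st seed v0 d; have := edge_budget_step st seed v0 d.
rewrite mulSn; lia.
Qed.

Section Labels.
Variable L : {set T}.

Definition pending (st : state) (p : T * T) : bool :=
  (p.1 \in L) && (p.1 \notin S st p.2).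

Definition npending (st : state) : nat := #|[set p | pending st p]|.

Definition queue_inv (st : state) : Prop := forall p, Q st p -> pending st p.

Lemma pending_step (st : state) seed v0 d p :
  pending (step st seed v0 d).1 p = (p != (seed, v0)) && pending st p.
Proof.
case: p => a b; rewrite /pending S_step ffunE /= xpair_eqE.
case: (eqVneq b v0) => [->|_]; last by rewrite andbF.
by rewrite andbT in_setU1 negb_or andbCA.
Qed.

Lemma queued_step (st : state) seed v0 d p : Q (step st seed v0 d).1 p ->
  p != (seed, v0) /\
  (Q st p \/ p.1 = seed /\ p.1 \notin S (step st seed v0 d).1 p.2).
Proof.
set S' := S _; have S'E : S' = _ := S_step st seed v0 d.
rewrite /Defs.next; case: ifP => _ /=; rewrite ffunE; case: ifP => [//|/negbT neq].
  case: ifP => [/andP[/eqP p1 /and3P[_ _ nS]] _|_ Qp]; last by split; [|left].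
  by split; last by right; rewrite S'E p1.
by split; [|left].
Qed.

Lemma queue_inv_step (st : state) seed v0 d :
  queue_inv st -> Q st (seed, v0) = Some d -> queue_inv (step st seed v0 d).1.
Proof.
move=> inv Qx; have /andP[seedL _] : pending st (seed, v0) by apply: inv; rewrite Qx.
move=> p /queued_step[neq [/inv|[p1 nS]]]; first by rewrite pending_step neq.
by rewrite /pending nS p1 seedL.
Qed.

Lemma npending_step (st : state) seed v0 d :
  queue_inv st -> Q st (seed, v0) = Some d ->
  npending (step st seed v0 d).1 < npending st.
Proof.
move=> inv Qx; apply: proper_card; apply/properP; split.
  by apply/subsetP => p; rewrite !inE pending_step => /andP[].
exists (seed, v0); first by rewrite inE inv ?Qx.
by rewrite inE pending_step eqxx.
Qed.

Lemma run_pops_le_npending (st : state) c np :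
  queue_inv st -> run st c np -> np <= npending st.
Proof.
move=> + r; elim: r => {st c np} [//|st seed v0 d c np [Qx _] _ IH] inv.
exact: leq_ltn_trans (IH (queue_inv_step inv Qx)) (npending_step inv Qx).
Qed.

Lemma exists_is_min (st : state) : qsize st != 0 -> exists p d, is_min st p d.
Proof.
rewrite cards_eq0 => /set0Pn[p0]; rewrite inE => Qp0.
case: (@arg_minP _ R _ p0 (fun p => Q st p) (fun p => odflt 0%R (Q st p)) Qp0).
move=> p Qp minp.
case Qp_eq: (Q st p) Qp => [d|] // _; exists p, d; split=> // p' d' Qp'.
by have := minp p'; rewrite Qp' Qp_eq => /(_ isT).
Qed.

Lemma run_exists (st : state) : queue_inv st -> exists c np, run st c np.
Proof.
have [n] := ubnP (npending st); elim: n st => // n IH st lt_n inv.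
have [empty|/exists_is_min[[seed v0] [d minx]]] := eqVneq (qsize st) 0.
  by exists 0, 0; constructor.
have [Qx _] := minx.
have [|c [np r]] := IH _ _ (queue_inv_step inv Qx).
  exact: leq_trans (npending_step inv Qx) _.
by exists ((step st seed v0 d).2 + c), np.+1; apply: run_pop minx r.
Qed.

Lemma queue_inv_init : queue_inv (init R L).
Proof.
by case=> a b; rewrite /pending !ffunE in_set0 andbT; case: ifP => // /andP[].
Qed.

Lemma qsize_init : qsize (init R L) = #|L|.
Proof.
rewrite /qsize -(card_imset (mem L) (f := fun x => (x, x))); last by move=> x y [].
apply: eq_card => -[a b]; rewrite !inE ffunE /=.
apply/idP/imsetP => [|[x Lx [-> ->]]]; last by rewrite eqxx Lx.
by case: ifP => // /andP[/eqP <- La] _; exists a.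
Qed.

Lemma npending_init_le : npending (init R L) <= #|L| * #|T|.
Proof.
rewrite -cardsT -cardsX subset_leq_card //.
by apply/subsetP => -[a b]; rewrite !inE andbT => /andP[].
Qed.

End Labels.

Lemma edge_budget_init (L : {set T}) : edge_budget (init R L) = k * #|arcs e|.
Proof.
rewrite /edge_budget (eq_bigr (fun v => k * deg v)) => [|v _]; last first.
  by rewrite ffunE subn0.
rewrite -big_distrr /= -sum1_card; congr (_ * _).
rewrite (eq_bigr (fun v => \sum_(u | e v u) 1)) => [|v _]; last first.
  by rewrite /deg -sum1_card; apply: eq_bigl => u; rewrite inE.
rewrite (pair_big_dep predT (fun v u => e v u) (fun _ _ => 1)) /=.
by apply: eq_bigl => p; rewrite inE.
Qed.

End Algorithm.

Section EdgeCount.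
Variables (T : finType) (e : rel T).
Hypothesis e_irr : irreflexive e.

Lemma card_arcs_asym_le (lt : rel T) : (forall a b, lt a b -> ~~ lt b a) ->
  #|[set p in arcs e | lt p.1 p.2]| <= #|edges e|.
Proof.
move=> lt_asym; rewrite -(@card_in_imset _ _ (fun p : T * T => [set p.1; p.2])).
  by rewrite subset_leq_card // imsetS //; apply/subsetP => p; rewrite !inE => /andP[].
move=> [a b] [c d]; rewrite !inE /= => /andP[eab lt_ab] /andP[_ lt_cd] eq_ab_cd.
have neq_ab : a != b by apply: contraTneq eab => ->; rewrite e_irr.
have /set2P[ac|ad] : a \in [set c; d] by rewrite -eq_ab_cd set21.
all: have /set2P[bc|bd] : b \in [set c; d] by rewrite -eq_ab_cd set22.
- by rewrite ac bc eqxx in neq_ab.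
- by rewrite ac bd.
- by move: (lt_asym _ _ lt_cd); rewrite -ad -bc lt_ab.
- by rewrite ad bd eqxx in neq_ab.
Qed.

Lemma card_arcs_le : #|arcs e| <= 2 * #|edges e|.
Proof.
pose lt (a b : T) := enum_rank a < enum_rank b.
have lt_asym a b : lt a b -> ~~ lt b a by rewrite /lt -leqNgt => /ltnW.
have split_arcs : arcs e \subset
    [set p in arcs e | lt p.1 p.2] :|: [set p in arcs e | lt p.2 p.1].
  apply/subsetP => -[a b]; rewrite !inE /= /lt => eab; rewrite eab /=.
  by case: ltngtP => // /val_inj/enum_rank_inj eq_ab; rewrite eq_ab e_irr in eab.
rewrite (leq_trans (subset_leq_card split_arcs)) // (leq_trans (leq_card_setU _ _)) //.
rewrite mul2n -addnn leq_add ?(card_arcs_asym_le lt_asym) //.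
by apply: (@card_arcs_asym_le (fun a b => lt b a)) => a b /lt_asym.
Qed.

End EdgeCount.

Lemma trunc_logM_le p m n : 1 < p ->
  trunc_log p (m * n) <= trunc_log p m + trunc_log p n + 1.
Proof.
move=> p_gt1; have [->|m_gt0] := posnP m; first by rewrite mul0n trunc_log0.
have [->|n_gt0] := posnP n; first by rewrite muln0 trunc_log0.
have mn_gt0 : 0 < m * n by rewrite muln_gt0 m_gt0.
rewrite addn1 -ltnS -(ltn_exp2l _ _ p_gt1).
apply: leq_ltn_trans (trunc_logP p_gt1 mn_gt0) _.
rewrite -addnS -addSn expnD.
by apply: ltn_mul; apply: trunc_log_ltn.
Qed.

Lemma leq_mul_trunc_log2 N n : n <= N * N -> n <= n * trunc_log 2 N + 1.
Proof.
have [N_ge2|N_le1] := leqP 2 N => n_le.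
  rewrite -{1}[n]muln1 (leq_trans _ (leq_addr _ _)) //.
  by rewrite leq_mul2l trunc_log_gt0 N_ge2 orbT.
by apply: leq_trans n_le _; nia.
Qed.

Theorem theoremB2 :
  exists C : nat,
  forall (R : realDomainType) (T : finType) (e : rel T) (w : T -> T -> R)
         (L : {set T}) (k : nat),
    irreflexive e -> symmetric e ->
    (forall x y, e x y -> w x y = w y x) ->
    (forall x y, e x y -> (0 <= w x y)%R) ->
    1 <= k ->
    (exists c np, run e w k (init R L) c np) /\
    (forall c np, run e w k (init R L) c np ->
       #|L| + c <= C * (k * #|edges e| + np * trunc_log 2 #|T| + 1) /\
       np <= minn (#|L| * #|T|) (#|L| + 2 * k * #|edges e|)).
Proof.
exists 5 => R T e w L k e_irr _ _ _ _.
have inv0 : queue_inv L (init R L) := @queue_inv_init R T L.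
split=> [|c np r]; first exact: (run_exists e w k inv0).
have L_le_np : #|L| <= np by rewrite -(qsize_init R L); apply: run_qsize_le r.
have np_le_LT := leq_trans (run_pops_le_npending inv0 r) (npending_init_le R L).
have arcs_le := card_arcs_le e_irr.
have np_le_edges : np <= #|L| + 2 * k * #|edges e|.
  by have := run_pops_le_potential r; rewrite qsize_init edge_budget_init; nia.
have c_le := run_cost_le r; rewrite edge_budget_init in c_le.
have log_le := trunc_logM_le #|T| #|T| (isT : 1 < 2).
have := leq_mul_trunc_log2 (leq_trans np_le_LT (leq_mul (max_card _) (leqnn _))).
split; [nia | by rewrite leq_min np_le_LT np_le_edges].
Qed.
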